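(* Let $r\ge1$, let $x_0,y_0$ be positive integers and let $\{(X_t,Y_t)\}_{t\ge 0}$ be the CA competition process with fitness ratio $r$ started at $(x_0,y_0)$. Let $\tau_1=\inf\{t\ge 0: X_t=Y_t\}$ be the time of the first tie. Then \[ \mathbb{P}[\tau_1<\infty]\le\begin{cases}1, & x_0\le y_0,\\[2pt] \dfrac{(y_0)_{x_0-y_0}}{(rx_0+y_0)_{x_0-y_0}}\left(1+\dfrac1r\right)^{x_0-y_0}, & x_0>y_0.\end{cases} \]
   Context: The CA competition process with fitness ratio $r\ge 1$ started at $(x_0,y_0)$ is the discrete-time Markov chain $\{(X_t,Y_t)\}_{t\ge0}$ on $\{(x,y)\in\mathbb{Z}^2: x\ge1,y\ge1\}$ with $(X_0,Y_0)=(x_0,y_0)$ and transition probabilities: from $(x,y)$ it moves to $(x+1,y)$ with probability $\frac{rx}{rx+y}$ and to $(x,y+1)$ with probability $\frac{y}{rx+y}$. $(x)_k=\prod_{i=0}^{k-1}(x+i)$ denotes the Pochhammer symbol (with $(x)_0=1$); $\inf\emptyset=\infty$. *)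

From HB Require Import structures.
From mathcomp Require Import all_boot all_order all_algebra.
From mathcomp Require Import boolp classical_sets reals.
Set Implicit Arguments. Unset Strict Implicit. Unset Printing Implicit Defensive.
Import Order.TTheory GRing.Theory Num.Theory.
Local Open Scope ring_scope.

Section CA.
Variable R : realType.

Definition ca_step (xy : nat * nat) (b : bool) : nat * nat :=
  if b then (xy.1.+1, xy.2) else (xy.1, xy.2.+1).

Definition ca_trans (r : R) (xy : nat * nat) (b : bool) : R :=
  let x := (xy.1)%:R in let y := (xy.2)%:R in
  if b then r * x / (r * x + y) else y / (r * x + y).

Fixpoint ca_path_prob (r : R) (xy : nat * nat) (s : seq bool) : R :=
  match s with
  | [::] => 1
  | b :: s' => ca_trans r xy b * ca_path_prob r (ca_step xy b) s'
  end.

Fixpoint ca_hits_tie (xy : nat * nat) (s : seq bool) : bool :=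
  (xy.1 == xy.2) ||
  match s with
  | [::] => false
  | b :: s' => ca_hits_tie (ca_step xy b) s'
  end.

(* P[tau_1 <= n] for the process started at (x0,y0) *)
Definition ca_tie_by (r : R) (x0 y0 n : nat) : R :=
  \sum_(s : n.-tuple bool)
     (if ca_hits_tie (x0, y0) s then ca_path_prob r (x0, y0) s else 0).

(* P[tau_1 < oo] = sup_n P[tau_1 <= n]  (continuity from below) *)
Definition ca_tie_prob (r : R) (x0 y0 : nat) : R :=
  sup (range (ca_tie_by r x0 y0)).

Definition poch (a : R) (k : nat) : R := \prod_(i < k) (a + i%:R).

End CA.

From HB Require Import structures.
From mathcomp Require Import all_boot all_order all_algebra.
From mathcomp Require Import boolp classical_sets reals.
From mathcomp Require Import ring.
Set Implicit Arguments. Unset Strict Implicit. Unset Printing Implicit Defensive.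
Import Order.TTheory GRing.Theory Num.Theory.
Local Open Scope ring_scope.

(* Let F(x, y) be the right-hand side of the bound (so F = 1 on and above the
   diagonal). Off the diagonal F is superharmonic for the chain: with
   k = x - y > 0, the up-step contributes exactly F(x, y) r/(r+1), while the
   right-step contributes at most F(x, y)/(r+1), because
   (rx+y) (rx+y+r)_(k+1) >= (rx+y)_(k+2) >= (rx+y)_k ((r+1)x)^2.
   Since F >= 0 and F = 1 on the diagonal, induction on the horizon n gives
   P[tau_1 <= n] <= F(x0, y0), and the bound passes to the supremum over n. *)

Lemma sum_tuple_cons (V : nmodType) n (G : seq bool -> V) :
  \sum_(t : n.+1.-tuple bool) G t = \sum_(b : bool) \sum_(t : n.-tuple bool) G (b :: t).
Proof.
rewrite pair_bigA /=.
rewrite (reindex (fun p : bool * n.-tuple bool => [tuple of p.1 :: p.2])) //=.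
exists (fun t : n.+1.-tuple bool => (thead t, [tuple of behead t])).
  by move=> [b t] _ /=; congr pair; apply: val_inj.
by move=> t _; rewrite [RHS]tuple_eta.
Qed.

Section CompetitionProcess.
Variable R : realType.
Variable r : R.

Section NonnegativeFitness.
Hypothesis r_ge0 : 0 <= r.

Lemma ca_weight_gt0 x y : (0 < y)%N -> 0 < r * x%:R + y%:R.
Proof. by move=> y_gt0; rewrite ltr_pwDr ?ltr0n ?mulr_ge0. Qed.

Lemma ca_trans_ge0 xy b : 0 <= ca_trans r xy b.
Proof. by case: b; rewrite /ca_trans divr_ge0 ?addr_ge0 ?mulr_ge0. Qed.

Lemma ca_trans_sum x y : (0 < y)%N ->
  ca_trans r (x, y) true + ca_trans r (x, y) false = 1.
Proof. by move=> y_gt0; rewrite /ca_trans -mulrDl divff ?gt_eqF ?ca_weight_gt0. Qed.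

Lemma ca_path_prob_sum n x y : (0 < y)%N ->
  \sum_(s : n.-tuple bool) ca_path_prob r (x, y) s = 1.
Proof.
elim: n x y => [|n IHn] x y y_gt0.
  rewrite (eq_bigr (fun=> 1)) ?sumr_const ?card_tuple // => s _.
  by rewrite tuple0.
rewrite sum_tuple_cons big_bool /= -!mulr_sumr !IHn //.
by rewrite !mulr1 ca_trans_sum.
Qed.

Lemma ca_tie_by_diag n x : (0 < x)%N -> ca_tie_by r x x n = 1.
Proof.
move=> x_gt0; rewrite -(ca_path_prob_sum n x x_gt0).
by apply: eq_bigr => s _; case: s => [[|? ?] ?]; rewrite /= eqxx.
Qed.

End NonnegativeFitness.

Lemma ca_tie_by0 x y : x != y -> ca_tie_by r x y 0 = 0.
Proof.
move=> /negbTE xy; rewrite /ca_tie_by big1 // => s _.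
by rewrite tuple0 /= xy.
Qed.

Lemma ca_tie_byS n x y : x != y ->
  ca_tie_by r x y n.+1 = ca_trans r (x, y) true * ca_tie_by r x.+1 y n
                         + ca_trans r (x, y) false * ca_tie_by r x y.+1 n.
Proof.
move=> /negbTE xy; rewrite /ca_tie_by.
rewrite (sum_tuple_cons _ (fun s => if ca_hits_tie (x, y) s then ca_path_prob r (x, y) s else 0)).
rewrite big_bool /= xy /= !mulr_sumr.
by congr (_ + _); apply: eq_bigr => s _; case: ifP; rewrite ?mulr0.
Qed.

End CompetitionProcess.

Section Pochhammer.
Variable R : realType.
Implicit Types (a b s : R) (k : nat).

Lemma pochSl a k : poch a k.+1 = a * poch (a + 1) k.
Proof.
rewrite /poch big_ord_recl addr0; congr (_ * _); apply: eq_bigr => i _.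
by rewrite lift0 -natr1 addrA addrAC.
Qed.

Lemma pochSr a k : poch a k.+1 = poch a k * (a + k%:R).
Proof. by rewrite /poch big_ord_recr. Qed.

Lemma poch_gt0 a k : 0 < a -> 0 < poch a k.
Proof. by move=> a_gt0; apply: prodr_gt0 => i _; rewrite ltr_wpDr. Qed.

Lemma poch_ge0 a k : 0 <= a -> 0 <= poch a k.
Proof. by move=> a_ge0; apply: prodr_ge0 => i _; rewrite addr_ge0. Qed.

Lemma ler_poch a b k : 0 <= a <= b -> poch a k <= poch b k.
Proof.
move=> /andP[a_ge0 le_ab]; apply: ler_prod => i _.
by rewrite addr_ge0 ?lerD2r.
Qed.

Lemma poch_sqr_le a s k : 0 <= a -> 1 <= s ->
  poch a k * (a + k%:R) ^+ 2 <= a * poch (a + s) k.+1.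
Proof.
move=> a_ge0 s_ge1; have a1_ge0 : 0 <= a + 1 by rewrite addr_ge0.
apply: le_trans (_ : a * poch (a + 1) k.+1 <= _); last first.
  by rewrite ler_wpM2l // ler_poch // a1_ge0 lerD2l.
rewrite -pochSl !pochSr -mulrA ler_wpM2l ?poch_ge0 // -natr1 addrA.
by rewrite expr2 ler_wpM2l ?addr_ge0 ?lerDl.
Qed.

End Pochhammer.

Section TieBound.
Variable R : realType.
Variable r : R.
Hypothesis r_ge1 : 1 <= r.

Let r_gt0 : 0 < r. Proof. exact: lt_le_trans r_ge1. Qed.
Let r_ge0 : 0 <= r. Proof. exact: ltW. Qed.
Let c_gt0 : 0 < 1 + r^-1. Proof. by rewrite addr_gt0 ?invr_gt0. Qed.

Definition tie_bound (x y : nat) : R :=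
  if (x <= y)%N then 1
  else poch y%:R (x - y) / poch (r * x%:R + y%:R) (x - y) * (1 + r^-1) ^+ (x - y).

Lemma tie_boundE x y : (y <= x)%N ->
  tie_bound x y =
  poch y%:R (x - y) / poch (r * x%:R + y%:R) (x - y) * (1 + r^-1) ^+ (x - y).
Proof.
move=> le_yx; rewrite /tie_bound; case: (leqP x y) => // le_xy.
have -> : x = y by apply/eqP; rewrite eqn_leq le_xy.
by rewrite subnn /poch !big_ord0 divr1 expr0 mulr1.
Qed.

Lemma tie_bound_ge0 x y : (0 < y)%N -> 0 <= tie_bound x y.
Proof.
move=> y_gt0; rewrite /tie_bound; case: ifP => // _.
have A_gt0 := ca_weight_gt0 r_ge0 x y_gt0.
by rewrite mulr_ge0 ?divr_ge0 ?exprn_ge0 ?poch_ge0 ?(ltW A_gt0) ?(ltW c_gt0).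
Qed.

Lemma tie_bound_up x y : (0 < y)%N -> (y < x)%N ->
  ca_trans r (x, y) false * tie_bound x y.+1 = tie_bound x y / (1 + r^-1).
Proof.
move=> y_gt0 lt_yx; rewrite !tie_boundE ?(ltnW lt_yx) // -(subnSK lt_yx).
rewrite !pochSl /ca_trans /= -!natr1 addrA exprS.
have A_gt0 := ca_weight_gt0 r_ge0 x y_gt0.
by field; rewrite !gt_eqF ?poch_gt0 ?(addr_gt0 A_gt0) ?(addr_gt0 r_gt0).
Qed.

Lemma tie_bound_right x y : (0 < y)%N -> (y < x)%N ->
  ca_trans r (x, y) true * tie_bound x.+1 y <= tie_bound x y / (r + 1).
Proof.
move=> y_gt0 lt_yx; have le_yx := ltnW lt_yx.
rewrite !tie_boundE ?leqW // subSn //.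
have A_gt0 := ca_weight_gt0 r_ge0 x y_gt0.
set k := (x - y)%N; set A := r * x%:R + y%:R.
have yk_eq : y%:R + k%:R = x%:R :> R by rewrite -natrD subnKC.
have Ak_eq : A + k%:R = (r + 1) * x%:R by rewrite /A -addrA yk_eq mulrDl mul1r.
have growth := poch_sqr_le k (ltW A_gt0) r_ge1; rewrite Ak_eq in growth.
rewrite pochSr yk_eq /ca_trans /= -natr1 (_ : r * (x%:R + 1) + y%:R = A + r);
  last by rewrite /A; ring.
set P := poch y%:R k; set Q := poch A k; set W := poch (A + r) k.+1.
rewrite -[r * x%:R + y%:R]/A in growth *; set c := 1 + r^-1.
have Q_gt0 : 0 < Q by apply: poch_gt0.
have W_gt0 : 0 < W by apply/poch_gt0/addr_gt0.
rewrite -subr_ge0 (_ : _ - _ = P * c ^+ k / (A * W * Q * (r + 1)) *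
                               (A * W - Q * ((r + 1) * x%:R) ^+ 2)).
  have den_gt0 : 0 < A * W * Q * (r + 1).
    by rewrite mulr_gt0 ?addr_gt0 // mulr_gt0 // mulr_gt0.
  have P_ge0 : 0 <= P by apply: poch_ge0.
  apply: mulr_ge0; last by rewrite subr_ge0.
  by apply: divr_ge0; [apply/mulr_ge0/exprn_ge0/ltW | apply: ltW].
rewrite exprS; move: (c ^+ k) => C; rewrite /c.
by field; rewrite !gt_eqF // addr_gt0.
Qed.

Lemma tie_bound_superharmonic x y : (0 < y)%N -> x != y ->
  ca_trans r (x, y) true * tie_bound x.+1 y + ca_trans r (x, y) false * tie_bound x y.+1
  <= tie_bound x y.
Proof.
move=> y_gt0; case: ltngtP => // [lt_xy | lt_yx] _.
  have le_xy := ltnW lt_xy.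
  by rewrite /tie_bound lt_xy le_xy (leqW le_xy) !mulr1 ca_trans_sum.
apply: le_trans (lerD (tie_bound_right y_gt0 lt_yx) (lexx _)) _.
have inv_sum : (r + 1)^-1 + (1 + r^-1)^-1 = 1.
  by field; rewrite !gt_eqF ?addr_gt0.
by rewrite tie_bound_up // -mulrDr inv_sum mulr1.
Qed.

Lemma ca_tie_by_le_bound n x y : (0 < y)%N -> ca_tie_by r x y n <= tie_bound x y.
Proof.
elim: n x y => [|n IHn] x y y_gt0.
all: have [-> | xy] := eqVneq x y; first by rewrite ca_tie_by_diag // /tie_bound leqnn.
  by rewrite ca_tie_by0 // tie_bound_ge0.
rewrite ca_tie_byS //; apply: le_trans (tie_bound_superharmonic y_gt0 xy).
by apply: lerD; apply: ler_wpM2l; rewrite ?ca_trans_ge0 ?IHn.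
Qed.

End TieBound.

Theorem lemma4 (R : realType) (r : R) (x0 y0 : nat) :
  1 <= r -> (0 < x0)%N -> (0 < y0)%N ->
  ca_tie_prob r x0 y0 <=
    (if (x0 <= y0)%N then 1
     else poch (y0%:R) (x0 - y0) / poch (r * x0%:R + y0%:R) (x0 - y0)
          * (1 + r^-1) ^+ (x0 - y0)).
Proof.
move=> r_ge1 _ y0_gt0.
apply: ge_sup; first by exists (ca_tie_by r x0 y0 0), 0%N.
by move=> _ [n _ <-]; apply: ca_tie_by_le_bound.
Qed.
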